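(* Let $n\ge 1$ and let $d$ be a positive integer with $d\le n$. The number of closed walks of length $d$ in the graph $G(n,312)$ is $\binom{2d}{d}$.
   Context: For a sequence $x=x_1\cdots x_m$ of distinct real numbers, its standardization $\Pi(x)$ is the unique permutation $\pi\in\mathfrak S_m$ with $\pi_i<\pi_j \iff x_i<x_j$ for all $i,j$. A permutation $\pi\in\mathfrak S_m$ avoids $312$ if there are no indices $i<j<k$ with $\pi_j<\pi_k<\pi_i$; $\mathfrak S_m(312)$ denotes the set of such permutations. The graph $G(n,312)$ is the directed multigraph with vertex set $\mathfrak S_n(312)$ having, for each $\sigma=\sigma_1\cdots\sigma_{n+1}\in\mathfrak S_{n+1}(312)$, one directed edge labelled $\sigma$ from $\Pi(\sigma_1\cdots\sigma_n)$ (its tail) to $\Pi(\sigma_2\cdots\sigma_{n+1})$ (its head). A closed walk of length $d$ is a list of $d$ edges $(e_1,\dots,e_d)$ with $\mathrm{head}(e_i)=\mathrm{tail}(e_{i+1})$ for $1\le i\le d-1$ and $\mathrm{head}(e_d)=\mathrm{tail}(e_1)$; different cyclic shifts of a closed walk count as different closed walks. *)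

From mathcomp Require Import all_boot.
Set Implicit Arguments. Unset Strict Implicit. Unset Printing Implicit Defensive.

(* Permutations of [m] are represented as sequences of naturals that are
   rearrangements of [1; ...; m] (one-line notation). *)

Definition perms (m : nat) : seq (seq nat) := permutations (iota 1 m).

Definition standardize (x : seq nat) : seq nat :=
  [seq (count (fun y => y < xi) x).+1 | xi <- x].

Definition avoids312 (s : seq nat) : bool :=
  all (fun i => all (fun j => all (fun k =>
     ~~ [&& i < j, j < k, nth 0 s j < nth 0 s k & nth 0 s k < nth 0 s i])
     (iota 0 (size s))) (iota 0 (size s))) (iota 0 (size s)).

Definition S312 (m : nat) : seq (seq nat) := [seq s <- perms m | avoids312 s].

Definition edge_tail (sigma : seq nat) : seq nat :=
  standardize (take (size sigma).-1 sigma).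
Definition edge_head (sigma : seq nat) : seq nat :=
  standardize (behead sigma).

Fixpoint lists_of {T : Type} (L : seq T) (d : nat) : seq (seq T) :=
  if d is d'.+1 then [seq x :: w | x <- L, w <- lists_of L d'] else [:: [::]].

Definition is_closed_walk (w : seq (seq nat)) : bool :=
  all (fun i => edge_head (nth [::] w i) == edge_tail (nth [::] w (i.+1 %% size w)))
      (iota 0 (size w)).

(* Number of closed walks of length d in G(n,312); edges are the elements
   of S_{n+1}(312), so walks are d-lists of such edges. *)
Definition num_closed_walks (n d : nat) : nat :=
  count is_closed_walk (lists_of (S312 n.+1) d).

From mathcomp Require Import all_boot zify.
Set Implicit Arguments. Unset Strict Implicit. Unset Printing Implicit Defensive.

(* Deleting the last entry and standardizing sends an edge of G(n+1,312) to an
   edge of G(n,312) and commutes with taking heads and tails, so the closed walks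
   of G(n+1,312) are the lifts of those of G(n,312).  If sigma, tau are
   consecutive edges of a closed walk, the lifts of sigma are its extensions by a
   last value whose head is tau: there is exactly one, except when sigma starts
   and tau ends with 1, where there are two, one starting and one ending with 1.
   So only the marks "starts with 1" and "ends with 1" matter: each lift moves
   every end-mark one edge backwards and splits an edge carrying both marks,
   which is Pascal's rule.  The unique closed walk of length d in G(0,312) has
   both marks on all d edges; after n >= d lifts every start-mark has met every
   end-mark, and the count is C(2d, d). *)


(** * Standardization *)

Lemma count_lt_strict (x : seq nat) a b :
  a < b -> a \in x -> count (fun y => y < a) x < count (fun y => y < b) x.
Proof.
move=> ab; elim: x => [|h t IH] //=; rewrite inE => /orP [/eqP <-|ht].
  rewrite ltnn ab /= add0n add1n ltnS; apply: sub_count => y /= ya; lia.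
have := IH ht; case: (ltnP h a) => ha /=; case: (ltnP h b) => hb /=; lia.
Qed.

Lemma count_lt_mono (x : seq nat) a b :
  a <= b -> count (fun y => y < a) x <= count (fun y => y < b) x.
Proof. by move=> ab; apply: sub_count => y /= ya; apply: leq_trans ab. Qed.

Lemma count_lt_iota v a N : count (fun y => y < v) (iota a N) = minn (v - a) N.
Proof.
elim: N a => [|N IH] a /=; first by rewrite minn0.
by rewrite IH; case: (ltnP a v) => h /=; lia.
Qed.

Lemma size_standardize x : size (standardize x) = size x.
Proof. exact: size_map. Qed.

Lemma nth_standardize (x : seq nat) i : i < size x ->
  nth 0 (standardize x) i = (count (fun y => y < nth 0 x i) x).+1.
Proof. by move=> ix; rewrite /standardize (nth_map 0). Qed.

Lemma ltn_nth_standardize (x : seq nat) i j : uniq x -> i < size x -> j < size x ->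
  (nth 0 (standardize x) i < nth 0 (standardize x) j) = (nth 0 x i < nth 0 x j).
Proof.
move=> ux ix jx; rewrite !nth_standardize // ltnS.
have [lt_ij|le_ji] := ltnP (nth 0 x i) (nth 0 x j).
  by apply: count_lt_strict => //; apply: mem_nth.
by apply/negbTE; rewrite -leqNgt; apply: count_lt_mono.
Qed.

Definition same_pattern (x y : seq nat) := size x = size y /\
  forall i j, i < size x -> j < size x ->
    (nth 0 x i < nth 0 x j) = (nth 0 y i < nth 0 y j).

Lemma same_pattern_sym x y : same_pattern x y -> same_pattern y x.
Proof. by move=> [sz c]; split=> // i j; rewrite -sz => ix jx; rewrite c. Qed.

Lemma same_pattern_standardize x : uniq x -> same_pattern x (standardize x).
Proof.
move=> ux; split=> [|i j ix jx]; first by rewrite size_standardize.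
by rewrite ltn_nth_standardize.
Qed.

Lemma count_nth_iota (T : Type) (x0 : T) (p : pred T) (s : seq T) :
  count p s = count (fun j => p (nth x0 s j)) (iota 0 (size s)).
Proof. by rewrite -{1}(mkseq_nth x0 s) /mkseq count_map. Qed.

Lemma standardize_same_pattern x y :
  same_pattern x y -> standardize x = standardize y.
Proof.
move=> [sz cmp]; apply: (@eq_from_nth _ 0); first by rewrite !size_standardize.
rewrite size_standardize => i ix; rewrite !nth_standardize -?sz //; congr S.
rewrite (count_nth_iota 0 _ x) (count_nth_iota 0 _ y) -sz; apply: eq_in_count => j.
by rewrite mem_iota add0n => /andP [_ jx] /=; rewrite cmp.
Qed.

Lemma same_pattern_take k x y :
  same_pattern x y -> same_pattern (take k x) (take k y).
Proof.
move=> [sz c]; split=> [|i j]; first by rewrite !size_take sz.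
rewrite size_take => ik jk.
have [[ik' jk'] [ix jx]] : (i < k /\ j < k) /\ (i < size x /\ j < size x).
  by move: ik jk; case: (ltnP k (size x)) => h ik jk; lia.
by rewrite !nth_take // c.
Qed.

Lemma same_pattern_behead x y :
  same_pattern x y -> same_pattern (behead x) (behead y).
Proof.
move=> [sz c]; split=> [|i j]; first by rewrite !size_behead sz.
by rewrite size_behead => ix jx; rewrite !nth_behead c //; lia.
Qed.

Lemma standardize_take_standardize k x : uniq x ->
  standardize (take k (standardize x)) = standardize (take k x).
Proof.
move=> ux; apply/standardize_same_pattern/same_pattern_sym/same_pattern_take.
exact: same_pattern_standardize.
Qed.

Lemma standardize_behead_standardize x : uniq x ->
  standardize (behead (standardize x)) = standardize (behead x).
Proof.
move=> ux; apply/standardize_same_pattern/same_pattern_sym/same_pattern_behead.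
exact: same_pattern_standardize.
Qed.

Lemma perm_iota_uniq x N : perm_eq x (iota 1 N) -> uniq x.
Proof. by move=> p; rewrite (perm_uniq p) iota_uniq. Qed.

Lemma perm_iota_mem x N v : perm_eq x (iota 1 N) -> (v \in x) = (0 < v <= N).
Proof. by move=> p; rewrite (perm_mem p) mem_iota; lia. Qed.

Lemma perm_iota_size x N : perm_eq x (iota 1 N) -> size x = N.
Proof. by move=> p; rewrite (perm_size p) size_iota. Qed.

Lemma count_lt_perm_iota x N v : perm_eq x (iota 1 N) -> 0 < v <= N.+1 ->
  count (fun y => y < v) x = v.-1.
Proof. by move=> /permP -> hv; rewrite count_lt_iota; lia. Qed.

Lemma uniq_perm_iota (s : seq nat) N : uniq s -> size s = N ->
  (forall x, x \in s -> 0 < x <= N) -> perm_eq s (iota 1 N).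
Proof.
move=> us sz hb; apply: uniq_perm => //; first exact: iota_uniq.
have sub : {subset s <= iota 1 N} by move=> x /hb; rewrite mem_iota; lia.
by have [] := uniq_min_size us sub (eq_leq (etrans (size_iota 1 N) (esym sz))).
Qed.

Lemma standardize_perm_iota N x : perm_eq x (iota 1 N) -> standardize x = x.
Proof.
move=> px; apply: (@eq_from_nth _ 0); first by rewrite size_standardize.
rewrite size_standardize => i ix; rewrite nth_standardize //.
have /andP [xi0 xiN] : 0 < nth 0 x i <= N by rewrite -(perm_iota_mem _ px) mem_nth.
by rewrite (count_lt_perm_iota px) ?prednK // xi0 leqW.
Qed.

Lemma perm_standardize x : uniq x -> perm_eq (standardize x) (iota 1 (size x)).
Proof.
move=> ux; apply: uniq_perm_iota; last 2 first.
- exact: size_standardize.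
- move=> v /(nthP 0) [i]; rewrite size_standardize => ix <-.
  rewrite nth_standardize //= -(count_predC (fun y => y < nth 0 x i)).
  rewrite -{1}[count _ _]addn0 ltn_add2l -has_count.
  by apply/hasP; exists (nth 0 x i); rewrite ?mem_nth //= ltnn.
apply/(uniqP 0) => i j; rewrite !inE size_standardize => ix jx e.
have := ltn_nth_standardize ux ix jx; have := ltn_nth_standardize ux jx ix.
rewrite e ltnn => /esym h1 /esym h2; apply/eqP; rewrite -(nth_uniq 0 ix jx ux).
by case: ltngtP h1 h2.
Qed.

(** * Extending a permutation by a last value *)

Definition shift (v x : nat) : nat := x + (v <= x).

(* [extend t v] is the permutation ending with [v] whose first entries
   standardize to [t]: entries of [t] that are at least [v] move up by one. *)
Definition extend (t : seq nat) (v : nat) : seq nat := rcons (map (shift v) t) v.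

Lemma ltn_shift v a b : (shift v a < shift v b) = (a < b).
Proof. by rewrite /shift; case: (leqP v a) => h1; case: (leqP v b) => h2 /=; lia. Qed.

Lemma shift_ltn v a : (shift v a < v) = (a < v).
Proof. by rewrite /shift; case: (leqP v a) => h1 /=; lia. Qed.

Lemma shift_inj v : injective (shift v).
Proof.
move=> a b e; case: (ltngtP a b) => // [ab|ba].
  by have := ltn_shift v a b; rewrite e ltnn ab.
by have := ltn_shift v b a; rewrite e ltnn ba.
Qed.

Lemma same_pattern_map_shift v t : same_pattern (map (shift v) t) t.
Proof.
split=> [|i j]; first by rewrite size_map.
by rewrite size_map => it jt; rewrite !(nth_map 0) // ltn_shift.
Qed.

Lemma size_extend t v : size (extend t v) = (size t).+1.
Proof. by rewrite size_rcons size_map. Qed.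

Lemma last_extend t v : last 0 (extend t v) = v.
Proof. exact: last_rcons. Qed.

Lemma extend_inj t : injective (extend t).
Proof. by move=> y z /(congr1 (last 0)); rewrite !last_extend. Qed.

Lemma eq_extend t y z : (extend t y == extend t z) = (y == z).
Proof. exact/inj_eq/extend_inj. Qed.

Lemma nth_extend t v i : i < size t -> nth 0 (extend t v) i = shift v (nth 0 t i).
Proof. by move=> it; rewrite nth_rcons size_map it (nth_map 0). Qed.

Lemma nth_extend_last t v : nth 0 (extend t v) (size t) = v.
Proof. by rewrite nth_rcons size_map ltnn eqxx. Qed.

Lemma perm_extend t N v : perm_eq t (iota 1 N) -> 0 < v <= N.+1 ->
  perm_eq (extend t v) (iota 1 N.+1).
Proof.
move=> p hv; apply: uniq_perm_iota.
- rewrite rcons_uniq map_inj_uniq ?(perm_iota_uniq p) ?andbT; last exact: shift_inj.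
  by apply/mapP => -[y _]; rewrite /shift; case: leqP => h /=; lia.
- by rewrite size_extend (perm_iota_size p).
move=> x; rewrite mem_rcons inE => /orP [/eqP -> //|/mapP [y yt ->]].
by move: yt; rewrite (perm_iota_mem _ p) /shift; case: leqP => h /=; lia.
Qed.

Lemma standardize_extend u v :
  standardize (extend u v) = extend (standardize u) (count (fun y => y < v) u).+1.
Proof.
have count_shift a : count (fun y => y < shift v a) (map (shift v) u)
    = count (fun y => y < a) u.
  by rewrite count_map; apply: eq_count => y /=; rewrite ltn_shift.
have count_shift_val : count (fun y => y < v) (map (shift v) u)
    = count (fun y => y < v) u.
  by rewrite count_map; apply: eq_count => y /=; rewrite shift_ltn.
apply: (@eq_from_nth _ 0); first by rewrite size_standardize !size_extend size_standardize.
rewrite size_standardize size_extend => i; rewrite ltnS leq_eqVlt => /orP [/eqP ->|iu].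
  rewrite nth_standardize ?size_extend // -{2}(size_standardize u) !nth_extend_last.
  by rewrite /extend -cats1 count_cat count_shift_val /= ltnn !addn0.
rewrite nth_standardize ?size_extend 1?ltnW // nth_extend ?size_standardize //.
rewrite nth_extend ?size_standardize // nth_standardize //.
rewrite /extend -cats1 count_cat count_shift /= addn0.
rewrite /shift; set c := count _ u; set w := count _ u.
have [h|h] := leqP v (nth 0 u i).
  have wc : w <= c by apply: count_lt_mono.
  by rewrite addn1 ltnS h ltnS wc.
have cw : c < w by apply: count_lt_strict => //; apply: mem_nth.
by rewrite addn0 ltnNge (ltnW h) ltnS leqNgt cw.
Qed.

Lemma extend_standardize_take s N : perm_eq s (iota 1 N.+1) ->
  s = extend (standardize (take N s)) (last 0 s).
Proof.
move=> p; have sz := perm_iota_size p.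
have es : s = rcons (take N s) (last 0 s).
  by rewrite -(nth_last 0) sz -take_nth ?sz // take_oversize ?sz.
set u := take N s in es *; set v := last 0 s in es *.
have /andP [vu _] : (v \notin u) && uniq u by rewrite -rcons_uniq -es (perm_iota_uniq p).
rewrite {1}es /extend; congr rcons.
apply: (@eq_from_nth _ 0); first by rewrite size_map size_standardize.
move=> i iu; rewrite (nth_map 0) ?size_standardize // nth_standardize //.
have : nth 0 u i \in s by rewrite es mem_rcons inE mem_nth ?orbT.
rewrite (perm_iota_mem _ p) => /andP [ui0 uiN].
have hc : count (fun y => y < nth 0 u i) s = (nth 0 u i).-1.
  by apply: (count_lt_perm_iota p); rewrite ui0 leqW.
rewrite {1}es -cats1 count_cat /= in hc.
have ne : nth 0 u i != v by apply: contraNneq vu => <-; apply: mem_nth.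
set c := count _ u in hc *; rewrite /shift.
by case: (ltngtP v (nth 0 u i)) hc ne => h /= hc ne //; lia.
Qed.

(** * 312-avoiding permutations and the edges of G(n,312) *)

Lemma avoids312P s : reflect
  (forall i j k, i < j -> j < k -> k < size s ->
     ~~ ((nth 0 s j < nth 0 s k) && (nth 0 s k < nth 0 s i)))
  (avoids312 s).
Proof.
apply: (iffP idP) => [h i j k ij jk ks|h].
  have mem_s l : l < size s -> l \in iota 0 (size s) by rewrite mem_iota.
  have ik : i < size s by lia.
  have jk' : j < size s by lia.
  move/allP/(_ i (mem_s i ik))/allP/(_ j (mem_s j jk'))/allP/(_ k (mem_s k ks)): h.
  by rewrite ij jk.
apply/allP => i; rewrite mem_iota => /andP [_ ik].
apply/allP => j; rewrite mem_iota => /andP [_ jk].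
apply/allP => k; rewrite mem_iota => /andP [_ kk].
by case: (ltnP i j) => ij //; case: (ltnP j k) => jk' //=; apply: h.
Qed.

Lemma avoids312_same_pattern x y : same_pattern x y -> avoids312 x = avoids312 y.
Proof.
move=> [sz c]; rewrite /avoids312 -sz.
apply: eq_in_all => i; rewrite mem_iota add0n => /andP [_ ix].
apply: eq_in_all => j; rewrite mem_iota add0n => /andP [_ jx].
apply: eq_in_all => k; rewrite mem_iota add0n => /andP [_ kx].
by rewrite !c.
Qed.

Lemma avoids312_standardize x : uniq x -> avoids312 (standardize x) = avoids312 x.
Proof. by move/same_pattern_standardize/avoids312_same_pattern. Qed.

Lemma avoids312_take k s : avoids312 s -> avoids312 (take k s).
Proof.
move=> /avoids312P h; apply/avoids312P => i j l ij jl; rewrite size_take => lt.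
have [lk ls] : l < k /\ l < size s by move: lt; case: (ltnP k (size s)); lia.
by rewrite !nth_take ?h //; lia.
Qed.

(* A 312-pattern of [rcons p x] lies in [p], lies in [behead (rcons p x)], or
   uses both the first and the last entry. *)
Lemma avoids312_rcons p x : avoids312 p -> avoids312 (behead (rcons p x)) ->
  (forall j, 0 < j < size p -> ~~ ((nth 0 p j < x) && (x < nth 0 p 0))) ->
  avoids312 (rcons p x).
Proof.
move=> /avoids312P hp /avoids312P hb hx; apply/avoids312P => i j k ij jk.
rewrite size_rcons ltnS leq_eqVlt => /orP [/eqP ek|kp]; last first.
  by rewrite !nth_rcons kp !(ltn_trans _ kp) ?(ltn_trans ij) //; apply: hp.
case: i ij => [|i] ij.
  have jp : j < size p by rewrite -ek.
  by rewrite !nth_rcons ek ltnn eqxx jp (leq_ltn_trans _ jp) //; apply: hx; lia.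
have [j0 k0] : 0 < j /\ 0 < k by lia.
have := hb i j.-1 k.-1; rewrite size_behead size_rcons /= !nth_behead !prednK //.
by apply; lia.
Qed.

Lemma mem_S312 N s : (s \in S312 N) = perm_eq s (iota 1 N) && avoids312 s.
Proof. by rewrite /S312 mem_filter /perms mem_permutations andbC. Qed.

Lemma S312_uniq N : uniq (S312 N).
Proof. by rewrite filter_uniq // permutations_uniq. Qed.

Lemma edge_tail_extend t v : edge_tail (extend t v) = standardize t.
Proof.
rewrite /edge_tail size_extend /= /extend -cats1 take_size_cat ?size_map //.
exact/standardize_same_pattern/same_pattern_map_shift.
Qed.

Lemma edge_head_extend a t v :
  edge_head (extend (a :: t) v) = extend (standardize t) (count (fun y => y < v) t).+1.
Proof. by rewrite /edge_head /extend /= -/(extend t v) standardize_extend. Qed.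

Lemma edge_tail_S312 N s : s \in S312 N.+1 -> edge_tail s \in S312 N.
Proof.
rewrite !mem_S312 => /andP [p av].
have u : uniq (take N s) by apply/take_uniq/(perm_iota_uniq p).
rewrite /edge_tail (perm_iota_size p) /= avoids312_standardize ?avoids312_take //.
by have := perm_standardize u; rewrite size_take (perm_iota_size p) ltnSn => ->.
Qed.

Lemma edge_head_tail N s : s \in S312 N.+1 ->
  edge_head (edge_tail s) = edge_tail (edge_head s).
Proof.
rewrite mem_S312 => /andP [p _]; have us := perm_iota_uniq p.
have sz := perm_iota_size p.
rewrite /edge_head /edge_tail sz /= standardize_behead_standardize ?take_uniq //.
rewrite size_standardize size_behead sz /= standardize_take_standardize.
  by case: s us {sz p} => [|x s] _ //; case: N => [|N] /=; rewrite ?take0.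
by case: s us {sz p} => //= x s /andP [].
Qed.

(** * Lifting an edge along a walk *)

Lemma size_extend_perm a t v N : perm_eq (extend (a :: t) v) (iota 1 N.+2) ->
  size t = N.
Proof. by move/perm_iota_size; rewrite size_extend => -[]. Qed.

Lemma extend_interior_index a t v N x :
  perm_eq (extend (a :: t) v) (iota 1 N.+2) -> 0 < x <= N.+2 ->
  x != shift v a -> x != v ->
  exists2 j, 0 < j < N.+1 & nth 0 (extend (a :: t) v) j = x.
Proof.
move=> p xN xa xv; have st := size_extend_perm p.
have : x \in extend (a :: t) v by rewrite (perm_iota_mem _ p).
move/(nthP 0) => [j]; rewrite size_extend /= st => jN sj; exists j => //.
have j0 : j != 0.
  by apply/eqP => j0; move: xa; rewrite -sj j0 nth_extend //= eqxx.
have jN1 : j != N.+1.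
  by apply/eqP => jN1; move: xv; rewrite -sj jN1 -st (nth_extend_last (a :: t)) eqxx.
by rewrite lt0n j0 ltn_neqAle jN1 -ltnS.
Qed.

(* Otherwise [(a + 1, 1, v)] is a 312-pattern. *)
Lemma avoids312_extend_last a t v N :
  perm_eq (extend (a :: t) v) (iota 1 N.+2) -> avoids312 (extend (a :: t) v) ->
  (a < v) || (v == 1).
Proof.
move=> p /avoids312P h; have st := size_extend_perm p.
have /andP [v0 _] : 0 < v <= N.+2.
  by rewrite -(perm_iota_mem _ p) mem_rcons mem_head.
rewrite orbC eq_sym; case: eqP => //= /eqP v1; rewrite ltnNge; apply/negP => va.
have s0 : shift v a = a.+1 by rewrite /shift va addn1.
have ne1a : 1 != shift v a by rewrite s0 eqSS eq_sym -lt0n (leq_trans v0 va).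
have [j /andP [j0 jN] sj] := extend_interior_index (x := 1) p isT ne1a (v1 : 1 != v).
have ks : N.+1 < size (extend (a :: t) v) by rewrite size_extend /= st.
have := h 0 j N.+1 j0 jN ks.
by rewrite sj -st (nth_extend_last (a :: t)) nth_extend // s0; lia.
Qed.

(* Otherwise the entries [1] and [w + 1] of [extend (a :: t) w] lie strictly
   inside it and form a 312-pattern with its last entry [w] or its first entry
   [a + 1], according to their order. *)
Lemma avoids312_extend_le a t w N :
  perm_eq (a :: t) (iota 1 N.+1) -> avoids312 (a :: t) ->
  avoids312 (behead (extend (a :: t) w)) -> 1 < w <= N.+1 -> a <= w.
Proof.
move=> p /avoids312P hp /avoids312P hb /andP [w1 wN].
rewrite leqNgt; apply/negP => wa.
have pe : perm_eq (extend (a :: t) w) (iota 1 N.+2) by apply: perm_extend p _; lia.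
have st := size_extend_perm pe.
have sat : size (a :: t) = N.+1 by rewrite /= st.
have s0 : shift w a = a.+1 by rewrite /shift (ltnW wa) addn1.
have sN : nth 0 (extend (a :: t) w) N.+1 = w by rewrite -st (nth_extend_last (a :: t)).
have s_nth i : i < N.+1 -> nth 0 (extend (a :: t) w) i = shift w (nth 0 (a :: t) i).
  by move=> iN; rewrite nth_extend ?sat.
have [j /andP [j0 jN] sj] : exists2 j, 0 < j < N.+1 & nth 0 (extend (a :: t) w) j = w.+1.
  by apply: extend_interior_index pe _ _ _; rewrite ?s0; lia.
have [k /andP [k0 kN] sk] : exists2 k, 0 < k < N.+1 & nth 0 (extend (a :: t) w) k = 1.
  by apply: extend_interior_index pe _ _ _; rewrite ?s0; lia.
case: (ltngtP j k) => jk.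
- have ks : N < size (behead (extend (a :: t) w)) by rewrite size_behead size_extend sat.
  have := hb j.-1 k.-1 N; rewrite !nth_behead !prednK // sj sk sN.
  by move=> /(_ _ _ ks); lia.
- have := hp 0 k j k0 jk; rewrite sat => /(_ jN) /=.
  rewrite -(ltn_shift w (nth 0 _ k)) -(ltn_shift w (nth 0 _ j)) -!s_nth ?(ltn_trans jk) //.
  by rewrite sj sk s0; lia.
- by move: sj; rewrite jk sk; lia.
Qed.

Definition lift_edges N (sigma tau : seq nat) : seq (seq nat) :=
  [seq s <- S312 N.+2 | (edge_tail s == sigma) && (edge_head s == tau)].

Definition lift_values (a w : nat) : seq nat :=
  (if a <= w then [:: w.+1] else [::]) ++ (if w == 1 then [:: 1] else [::]).

Lemma mem_lift_values a w v : 0 < a ->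
  (v \in lift_values a w) = ((v.-1 - (a < v)).+1 == w) && ((a < v) || (v == 1)).
Proof.
move=> a0; rewrite /lift_values mem_cat.
by case: (ltnP a v) => av; do 2 case: ifP; rewrite ?inE ?in_nil /= => ? ?; lia.
Qed.

Lemma lift_values_uniq a w : uniq (lift_values a w).
Proof. by rewrite /lift_values; case: ifP; case: ifP => //= /eqP ->. Qed.

(* These two marks of the edges of a walk determine its number of lifts. *)
Definition end_flags (s : seq nat) : bool * bool := (head 0 s == 1, last 0 s == 1).

Definition lift_flags (p : bool * bool) : seq (bool * bool) :=
  if p.1 && p.2 then [:: (true, false); (false, true)] else [:: p].

Lemma end_flags_extend a t v : end_flags (extend (a :: t) v) = (shift v a == 1, v == 1).
Proof. by rewrite /end_flags last_extend. Qed.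

Section LiftEdge.

Variables (N a : nat) (t tau : seq nat).
Hypothesis sigma_S312 : a :: t \in S312 N.+1.
Hypothesis tau_S312 : tau \in S312 N.+1.
Hypothesis head_tail : edge_head (a :: t) = edge_tail tau.

Let w := last 0 tau.

Let sigma_perm : perm_eq (a :: t) (iota 1 N.+1).
Proof. by move: sigma_S312; rewrite mem_S312 => /andP []. Qed.

Let tau_perm : perm_eq tau (iota 1 N.+1).
Proof. by move: tau_S312; rewrite mem_S312 => /andP []. Qed.

Let sigma_avoids : avoids312 (a :: t).
Proof. by move: sigma_S312; rewrite mem_S312 => /andP []. Qed.

Let tau_avoids : avoids312 tau.
Proof. by move: tau_S312; rewrite mem_S312 => /andP []. Qed.

Let a_range : 0 < a <= N.+1.
Proof. by rewrite -(perm_iota_mem _ sigma_perm) mem_head. Qed.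

Let w_range : 0 < w <= N.+1.
Proof.
rewrite -(perm_iota_mem _ tau_perm) /w.
by case: tau (perm_iota_size tau_perm) => // x s _; apply: mem_last.
Qed.

Lemma tau_extend : tau = extend (standardize t) w.
Proof.
rewrite {1}(extend_standardize_take tau_perm); congr extend.
by move: head_tail; rewrite /edge_head /edge_tail (perm_iota_size tau_perm) => ->.
Qed.

Lemma count_lt_tail v : 0 < v <= N.+2 -> count (fun y => y < v) t = v.-1 - (a < v).
Proof. by move=> hv; have := count_lt_perm_iota sigma_perm hv; rewrite /=; lia. Qed.

Lemma edge_head_extendE v : 0 < v <= N.+2 ->
  (edge_head (extend (a :: t) v) == tau) = ((v.-1 - (a < v)).+1 == w).
Proof. by move=> hv; rewrite edge_head_extend tau_extend eq_extend count_lt_tail. Qed.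

Lemma extend_S312 v : 0 < v <= N.+2 -> (v.-1 - (a < v)).+1 = w ->
  (a < v) || (v == 1) -> extend (a :: t) v \in S312 N.+2.
Proof.
move=> hv hw hav; have pe := perm_extend sigma_perm hv.
rewrite mem_S312 pe /=; apply: avoids312_rcons.
- by rewrite (avoids312_same_pattern (same_pattern_map_shift v (a :: t))).
- have /andP [_ ub] : uniq (extend (a :: t) v) := perm_iota_uniq pe.
  have /eqP : edge_head (extend (a :: t) v) == tau by rewrite edge_head_extendE // hw.
  by rewrite -avoids312_standardize // /edge_head /extend => ->.
move=> j /andP [_]; rewrite size_map => jt; rewrite !(nth_map 0) //= /shift.
have := mem_nth 0 jt; rewrite (perm_iota_mem _ sigma_perm) => /andP [x0 _].
case/orP: hav => [av|/eqP v1]; last by rewrite v1 x0; apply/negP; lia.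
by rewrite (leqNgt v a) av; apply/negP; lia.
Qed.

Lemma mem_lift_edges s :
  (s \in lift_edges N (a :: t) tau) = (s \in map (extend (a :: t)) (lift_values a w)).
Proof.
have [a0 _] := andP a_range.
apply/idP/mapP => [|[v]].
  rewrite mem_filter => /andP [/andP [/eqP et /eqP eh] sS].
  move: (sS); rewrite mem_S312 => /andP [ps avs].
  have se : s = extend (a :: t) (last 0 s).
    by rewrite {1}(extend_standardize_take ps) -et /edge_tail (perm_iota_size ps).
  set v := last 0 s in se; exists v => //.
  have hv : 0 < v <= N.+2 by rewrite -(perm_iota_mem _ ps) se mem_rcons mem_head.
  rewrite mem_lift_values // -edge_head_extendE // -se eh eqxx /=.
  by apply: (avoids312_extend_last (t := t) (N := N)); rewrite -se.
rewrite mem_lift_values // => /andP [/eqP hw hav] ->.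
have hv : 0 < v <= N.+2 by case/andP: w_range; case: (ltnP a v) hw hav => //= av; lia.
rewrite mem_filter extend_S312 // andbT edge_tail_extend.
by rewrite (standardize_perm_iota sigma_perm) eqxx edge_head_extendE // hw /=.
Qed.

Lemma perm_lift_edges :
  perm_eq (lift_edges N (a :: t) tau) (map (extend (a :: t)) (lift_values a w)).
Proof.
apply: uniq_perm; last exact: mem_lift_edges.
  by rewrite filter_uniq // S312_uniq.
by rewrite map_inj_uniq ?lift_values_uniq //; apply: extend_inj.
Qed.

Lemma head_le_last : 1 < w -> a <= w.
Proof.
move=> w1; rewrite leqNgt; apply/negP => wa.
have [w0 wN] := andP w_range; have hv : 0 < w <= N.+2 by rewrite w0 leqW.
have /andP [_ ub] : uniq (extend (a :: t) w) := perm_iota_uniq (perm_extend sigma_perm hv).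
have /eqP hd : edge_head (extend (a :: t) w) == tau.
  by rewrite edge_head_extendE // ltnNge (ltnW wa) /= subn0 prednK.
suff : a <= w by rewrite leqNgt wa.
apply: (avoids312_extend_le sigma_perm sigma_avoids); last by rewrite w1 wN.
by rewrite -avoids312_standardize // -[standardize _]/(edge_head _) hd.
Qed.

Lemma perm_end_flags_lift_edges :
  perm_eq (map end_flags (lift_edges N (a :: t) tau)) (lift_flags (a == 1, w == 1)).
Proof.
have [[w0 wN] [a0 aN]] := (andP w_range, andP a_range).
apply: perm_trans (perm_map end_flags perm_lift_edges) _.
rewrite -map_comp /lift_values.
have [aw|wa] := leqP a w.
  case: ifP => [/eqP w1|w1].
    have a1 : a = 1 by lia.
    by rewrite /= !end_flags_extend /shift a1 w1.
  rewrite /= end_flags_extend /lift_flags /= andbF /shift.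
  by rewrite (ltnNge w a) aw /= addn0 eqSS (gtn_eqF w0).
have w1 : w = 1 by case: (ltnP 1 w) => h; [have := head_le_last h; lia | lia].
rewrite w1 in wa *; rewrite /= end_flags_extend /shift /lift_flags.
by rewrite a0 addn1 eqSS (gtn_eqF a0) (gtn_eqF wa).
Qed.

End LiftEdge.

Lemma big_fibers_seq (A B : eqType) (f : A -> B) (s : seq A) (t : seq B) (F : A -> nat) :
  uniq t -> {subset map f s <= t} ->
  \sum_(x <- s) F x = \sum_(y <- t) \sum_(x <- s | f x == y) F x.
Proof.
move=> ut ht; under [RHS]eq_bigr => y _ do rewrite big_mkcond.
rewrite [RHS]exchange_big /=; apply: eq_big_seq => x xs.
rewrite -(big_mkcond (fun y => f x == y)) -big_filter.
have -> : [seq y <- t | f x == y] = [:: f x].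
  rewrite (@eq_filter _ _ (pred1 (f x))) => [|y]; last by rewrite /= eq_sym.
  by rewrite filter_pred1_uniq //; apply/ht/map_f.
by rewrite big_seq1.
Qed.

Fixpoint prod_seqs {T : Type} (Ls : seq (seq T)) : seq (seq T) :=
  if Ls is L :: Ls' then [seq x :: w | x <- L, w <- prod_seqs Ls'] else [:: [::]].

Lemma lists_of_prod_seqs {T : Type} (L : seq T) d : lists_of L d = prod_seqs (nseq d L).
Proof. by elim: d => //= d ->. Qed.

Lemma prod_seqsP (T : eqType) (x0 : T) (Ls : seq (seq T)) (W : seq T) :
  reflect (size W = size Ls /\ forall i, i < size Ls -> nth x0 W i \in nth [::] Ls i)
          (W \in prod_seqs Ls).
Proof.
elim: Ls W => [|L Ls IH] W /=.
  by rewrite inE; apply: (iffP eqP) => [->|[]] //; case: W.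
apply: (iffP allpairsP) => [[[x w] [/= xL /IH [sw hw] ->]]|[sz h]].
  by split=> [|[|i] //= /hw]; rewrite /= ?sw.
case: W sz h => // x w [sz] h; exists (x, w); split => //; first exact: (h 0).
by apply/IH; split=> // i; apply: (h i.+1).
Qed.

Lemma prod_seqs_uniq (T : eqType) (Ls : seq (seq T)) :
  all uniq Ls -> uniq (prod_seqs Ls).
Proof.
elim: Ls => [|L Ls IH] //= /andP [uL uLs].
apply: allpairs_uniq => //; first exact: IH.
by move=> [x w] [x' w'] _ _ /= [-> ->].
Qed.

Lemma big_prod_seqs_map (A B : eqType) (f : A -> B) (g : seq B -> nat)
    (Fs : seq (seq A)) (Os : seq (seq B)) :
  size Fs = size Os ->
  (forall i, i < size Fs -> perm_eq (map f (nth [::] Fs i)) (nth [::] Os i)) ->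
  \sum_(W <- prod_seqs Fs) g (map f W) = \sum_(s <- prod_seqs Os) g s.
Proof.
elim: Fs Os g => [|F Fs IH] [|O Os] g // => [_ _|[sz] hp]; first by rewrite !big_seq1.
rewrite !big_allpairs_dep /=.
transitivity (\sum_(x <- F) \sum_(s <- prod_seqs Os) g (f x :: s)).
  apply: eq_bigr => x _; apply: (IH Os (fun s => g (f x :: s))) => // i ii.
  exact: (hp i.+1).
rewrite -(big_map f xpredT (fun y => \sum_(s <- prod_seqs Os) g (y :: s))).
exact/perm_big/(hp 0).
Qed.

(** * Counting lifts of flagged cycles *)

Notation flag0 := (false, false).

Definition link_flags (s : seq (bool * bool)) : seq (bool * bool) :=
  [seq ((nth flag0 s i).1, (nth flag0 s (i.+1 %% size s)).2) | i <- iota 0 (size s)].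

Definition flag_lifts (s : seq (bool * bool)) : seq (seq (bool * bool)) :=
  prod_seqs (map lift_flags (link_flags s)).

Fixpoint lift_count (k : nat) (s : seq (bool * bool)) : nat :=
  if k is k'.+1 then \sum_(s' <- flag_lifts s) lift_count k' s' else 1.

Definition nfirst (s : seq (bool * bool)) := count (fun p => p.1) s.
Definition nlast (s : seq (bool * bool)) := count (fun p => p.2) s.

Lemma big_lift_flags_binomial (ps : seq (bool * bool)) X Y :
  \sum_(s <- prod_seqs (map lift_flags ps)) 'C(X + Y + nfirst s + nlast s, X + nfirst s)
  = 'C(X + Y + nfirst ps + nlast ps, X + nfirst ps).
Proof.
elim: ps X Y => [|[a b] ps IH] X Y /=; first by rewrite big_seq1 /nfirst /nlast !addn0.
rewrite big_allpairs_dep /=.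
transitivity (\sum_(x <- lift_flags (a, b))
    'C((X + x.1) + (Y + x.2) + nfirst ps + nlast ps, (X + x.1) + nfirst ps)).
  apply: eq_bigr => x _; rewrite -IH; apply: eq_bigr => s _.
  by rewrite /nfirst /nlast /=; case: x => [[] []] /=; congr binomial; lia.
rewrite /nfirst /nlast /= -/(nfirst ps) -/(nlast ps).
case: a; case: b; rewrite /lift_flags /= ?big_cons ?big_nil /= ?addn0;
  try by congr binomial; lia.
have -> : X + Y + (1 + nfirst ps) + (1 + nlast ps) = (X + Y + nfirst ps + nlast ps).+2 by lia.
have -> : X + (1 + nfirst ps) = (X + nfirst ps).+1 by lia.
by rewrite binS; congr addn; congr binomial; lia.
Qed.

(* The forward distance from [i] to [j] on a cycle of length [d], in [1..d];
   in particular [cdist d i i = d]. *)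
Definition cdist d i j := ((j + d - i.+1) %% d).+1.

Lemma cdistE d i j : i < d -> j < d ->
  cdist d i j = if i < j then j - i else d - (i - j).
Proof.
move=> id jd; rewrite /cdist; case: ltnP => ij.
  have -> : j + d - i.+1 = (j - i.+1) + d by lia.
  by rewrite modnDr modn_small; lia.
by rewrite modn_small; lia.
Qed.

Definition flags_within k (s : seq (bool * bool)) := forall i j, i < size s -> j < size s ->
  (nth flag0 s i).1 -> (nth flag0 s j).2 -> cdist (size s) i j <= k.

Lemma mem_lift_flags p p' : p' \in lift_flags p ->
  [/\ p'.1 -> p.1, p'.2 -> p.2 & ~~ (p'.1 && p'.2)].
Proof.
by case: p => [[] []]; rewrite /lift_flags /= !inE; [case/orP|..] => /eqP ->.
Qed.

Lemma mem_flag_lifts s s' : s' \in flag_lifts s -> size s' = size s /\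
  forall i, i < size s ->
  nth flag0 s' i \in lift_flags ((nth flag0 s i).1, (nth flag0 s (i.+1 %% size s)).2).
Proof.
move/(prod_seqsP flag0) => [sz h]; rewrite !size_map size_iota in sz h.
split => // i ii; have := h i ii.
by rewrite (nth_map flag0) ?size_map ?size_iota // (nth_map 0) ?size_iota // nth_iota.
Qed.

(* In a lift, first flags stay in place and last flags move one step back. *)
Lemma flags_within_lift k s s' : 0 < size s -> flags_within k.+1 s ->
  s' \in flag_lifts s -> flags_within k s'.
Proof.
move=> d0 hI /mem_flag_lifts [sz h] i j; rewrite sz => id jd ai bj.
have [hi1 _ hi3] := mem_lift_flags (h i id).
have [_ hj2 _] := mem_lift_flags (h j jd).
have ne : i != j by apply/eqP => eij; move: hi3; rewrite ai eij bj.
have jm : j.+1 %% size s < size s by rewrite ltn_mod.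
have := hI i (j.+1 %% size s) id jm (hi1 ai) (hj2 bj).
have [e|jd'] := eqVneq j.+1 (size s).
  by rewrite e modnn !cdistE //; case: ltnP => h1; case: ltnP => h2 //; lia.
have jS : j.+1 < size s by rewrite ltn_neqAle jd'.
rewrite modn_small // !cdistE //.
by case: ltnP => h1; case: ltnP => h2; lia.
Qed.

Lemma nfirst_link_flags s : nfirst (link_flags s) = nfirst s.
Proof. by rewrite /nfirst count_map (count_nth_iota flag0 _ s). Qed.

Lemma nlast_link_flags s : nlast (link_flags s) = nlast s.
Proof.
have -> : nlast (link_flags s)
    = nlast [seq nth flag0 s (i.+1 %% size s) | i <- iota 0 (size s)].
  by rewrite /nlast !count_map.
suff -> : [seq nth flag0 s (i.+1 %% size s) | i <- iota 0 (size s)] = rot 1 s.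
  by apply/permP; rewrite perm_rot.
case: s => [|x s] //; rewrite rot1_cons.
apply: (@eq_from_nth _ flag0); first by rewrite size_map size_iota size_rcons.
rewrite size_map size_iota => i ii.
rewrite (nth_map 0) ?size_iota // nth_iota // add0n nth_rcons /=.
move: ii; rewrite ltnS leq_eqVlt => /orP [/eqP ->|ii]; first by rewrite ltnn eqxx modnn.
by rewrite ii modn_small.
Qed.

Lemma lift_count_binomial k s : 0 < size s -> flags_within k s ->
  lift_count k s = 'C(nfirst s + nlast s, nfirst s).
Proof.
elim: k s => [|k IH] s s0 hI /=.
  have [->|hA] := posnP (nfirst s); first by rewrite bin0.
  suff -> : nlast s = 0 by rewrite addn0 binn.
  apply/eqP; rewrite -leqn0 leqNgt; apply/negP => hB.
  move: hA hB; rewrite /nfirst /nlast -!has_count => /hasP [x xs ax] /hasP [y ys by_].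
  have [i ii ei] := nthP flag0 xs; have [j jj ej] := nthP flag0 ys.
  by have := hI i j ii jj; rewrite ei ej => /(_ ax by_); rewrite ltn0.
rewrite (eq_big_seq (fun s' => 'C(nfirst s' + nlast s', nfirst s'))); last first.
  move=> s' ms'; apply: IH; first by have [-> _] := mem_flag_lifts ms'.
  exact: flags_within_lift ms'.
have := big_lift_flags_binomial (link_flags s) 0 0.
by rewrite nfirst_link_flags nlast_link_flags.
Qed.

(** * Closed walks *)

Definition closed_walks m d : seq (seq (seq nat)) :=
  [seq W <- lists_of (S312 m.+1) d | is_closed_walk W].

Lemma mem_lists_of (L : seq (seq nat)) d W :
  (W \in lists_of L d) = (size W == d) && all (mem L) W.
Proof.
rewrite lists_of_prod_seqs.
apply/(prod_seqsP [::])/andP => [[sz h]|[/eqP sz /(all_nthP [::]) h]].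
  rewrite size_nseq in sz h; split; first exact/eqP.
  by apply/(all_nthP [::]) => i ii; have := h i; rewrite nth_nseq -sz ii => /(_ isT).
split=> [|i]; first by rewrite size_nseq.
by rewrite size_nseq nth_nseq => ii; rewrite ii; apply: h; rewrite sz.
Qed.

Lemma is_closed_walkP W : reflect (forall i, i < size W ->
   edge_head (nth [::] W i) = edge_tail (nth [::] W (i.+1 %% size W))) (is_closed_walk W).
Proof.
apply: (iffP allP) => [h i ii|h i]; first by apply/eqP; apply: h; rewrite mem_iota.
by rewrite mem_iota => /andP [_ ii]; apply/eqP; apply: h.
Qed.

Lemma mem_closed_walks m d W : (W \in closed_walks m d) =
  [&& size W == d, all (mem (S312 m.+1)) W & is_closed_walk W].
Proof. by rewrite mem_filter mem_lists_of andbC andbA. Qed.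

Lemma closed_walks_uniq m d : uniq (closed_walks m d).
Proof.
rewrite filter_uniq // lists_of_prod_seqs prod_seqs_uniq // all_nseq.
by rewrite S312_uniq orbT.
Qed.

Lemma closed_walks0 d : closed_walks 0 d = [:: nseq d [:: 1]].
Proof.
rewrite /closed_walks.
have -> : lists_of (S312 1) d = [:: nseq d [:: 1]] by elim: d => //= d ->.
rewrite /= ifT //; apply/allP => i; rewrite mem_iota size_nseq => /andP [_ id].
by rewrite !nth_nseq id ltn_mod; case: d id.
Qed.

Lemma edge_tails_closed_walk m d W :
  W \in closed_walks m.+1 d -> map edge_tail W \in closed_walks m d.
Proof.
rewrite !mem_closed_walks => /and3P [/eqP sz /allP WS /is_closed_walkP cl].
rewrite size_map sz eqxx /=; apply/andP; split.
  by apply/allP => x /mapP [y yW ->]; apply/edge_tail_S312/WS.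
apply/is_closed_walkP; rewrite size_map => i ii.
rewrite !(nth_map [::]) ?ltn_mod; try lia.
by rewrite (edge_head_tail (N := m.+1)) ?cl //; apply/WS/mem_nth.
Qed.

Definition walk_lifts m (W : seq (seq nat)) : seq (seq (seq nat)) :=
  [seq lift_edges m (nth [::] W i) (nth [::] W (i.+1 %% size W)) | i <- iota 0 (size W)].

Lemma size_walk_lifts m W : size (walk_lifts m W) = size W.
Proof. by rewrite size_map size_iota. Qed.

Lemma mem_walk_lifts m d W W' : 0 < d -> W \in closed_walks m d ->
  (W' \in closed_walks m.+1 d) && (map edge_tail W' == W)
  = (W' \in prod_seqs (walk_lifts m W)).
Proof.
move=> d0; rewrite mem_closed_walks => /and3P [/eqP szW _ _].
rewrite /walk_lifts; apply/idP/(prod_seqsP [::]); rewrite size_map size_iota szW.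
  rewrite mem_closed_walks => /andP [/and3P [/eqP sz /allP WS /is_closed_walkP cl] /eqP et].
  split=> // i ii; have im : i.+1 %% d < d by rewrite ltn_mod.
  have inS : nth [::] W' i \in S312 m.+2 by apply/WS/mem_nth; rewrite sz.
  rewrite (nth_map 0) ?size_iota ?szW // nth_iota //= /lift_edges mem_filter inS.
  by rewrite -et !(nth_map [::]) ?sz // cl ?sz // !eqxx.
move=> [sz h].
have hi i : i < d -> [/\ nth [::] W' i \in S312 m.+2,
     edge_tail (nth [::] W' i) = nth [::] W i &
     edge_head (nth [::] W' i) = nth [::] W (i.+1 %% d)].
  move=> ii; have := h i ii; rewrite (nth_map 0) ?size_iota ?szW // nth_iota //=.
  by rewrite /lift_edges mem_filter => /andP [/andP [/eqP -> /eqP ->] ->].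
have et : map edge_tail W' = W.
  apply: (@eq_from_nth _ [::]); first by rewrite size_map sz szW.
  by rewrite size_map sz => i ii; rewrite (nth_map [::]) ?sz //; have [_ -> _] := hi i ii.
rewrite et eqxx andbT mem_closed_walks sz eqxx /=; apply/andP; split.
  by apply/(all_nthP [::]) => i; rewrite sz => ii; have [] := hi i ii.
apply/is_closed_walkP; rewrite sz => i ii; have [_ _ ->] := hi i ii.
have im : i.+1 %% d < d by rewrite ltn_mod.
by have [_ -> _] := hi _ im.
Qed.

Lemma perm_end_flags_walk_lifts m d W i : W \in closed_walks m d -> i < d ->
  perm_eq (map end_flags (nth [::] (walk_lifts m W) i))
          (nth [::] (map lift_flags (link_flags (map end_flags W))) i).
Proof.
rewrite mem_closed_walks => /and3P [/eqP <- /allP WS /is_closed_walkP cl] ii.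
have im : i.+1 %% size W < size W by rewrite ltn_mod (leq_ltn_trans _ ii).
rewrite (nth_map flag0) ?size_map ?size_iota ?size_map // (nth_map 0) ?size_iota //.
rewrite nth_iota // /link_flags size_map (nth_map 0) ?size_iota // nth_iota //=.
rewrite add0n !(nth_map [::]) //.
have inS j : j < size W -> nth [::] W j \in S312 m.+1 by move=> jW; apply/WS/mem_nth.
move: (cl i ii) (inS _ ii) (inS _ im); case: (nth [::] W i) => [|a t] ht sigmaS tauS.
  by move: sigmaS; rewrite mem_S312 => /andP [/perm_iota_size].
exact: perm_end_flags_lift_edges.
Qed.

Lemma big_closed_walks_lift m d (g : seq (bool * bool) -> nat) : 0 < d ->
  \sum_(W' <- closed_walks m.+1 d) g (map end_flags W')
  = \sum_(W <- closed_walks m d) \sum_(s <- flag_lifts (map end_flags W)) g s.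
Proof.
move=> d0; rewrite (@big_fibers_seq _ _ (map edge_tail) _ (closed_walks m d)).
- apply: eq_big_seq => W WC; rewrite -big_filter.
  rewrite (@perm_big _ _ _ _ _ (prod_seqs (walk_lifts m W))); last first.
    apply: uniq_perm; first by rewrite filter_uniq ?closed_walks_uniq.
      apply/prod_seqs_uniq/allP => F /mapP [i _ ->].
      by rewrite filter_uniq // S312_uniq.
    by move=> W'; rewrite mem_filter andbC mem_walk_lifts.
  have szW : size W = d by move: WC; rewrite mem_closed_walks => /andP [/eqP].
  apply: big_prod_seqs_map; first by rewrite size_walk_lifts /link_flags !size_map size_iota.
  by rewrite size_walk_lifts szW => i; apply: perm_end_flags_walk_lifts.
- exact: closed_walks_uniq.
by move=> _ /mapP [W' W'C ->]; apply: edge_tails_closed_walk.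
Qed.

Lemma big_closed_walks_lift_count m d k : 0 < d ->
  \sum_(W <- closed_walks m d) lift_count k (map end_flags W)
  = lift_count (m + k) (nseq d (true, true)).
Proof.
move=> d0; elim: m k => [|m IH] k.
  by rewrite closed_walks0 big_seq1 map_nseq.
by rewrite big_closed_walks_lift // addSnnS -IH.
Qed.

Theorem theorem5p1 (n d : nat) :
  1 <= n -> 0 < d -> d <= n -> num_closed_walks n d = 'C(2 * d, d).
Proof.
move=> _ d0 dn.
have -> : num_closed_walks n d = \sum_(W <- closed_walks n d) lift_count 0 (map end_flags W).
  by rewrite /num_closed_walks -size_filter -sum1_size.
rewrite big_closed_walks_lift_count // addn0 lift_count_binomial ?size_nseq //.
  by rewrite /nfirst /nlast !count_nseq /= !mul1n mul2n addnn.
move=> i j; rewrite size_nseq => id jd _ _.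
by rewrite /cdist; have := ltn_mod (j + d - i.+1) d; rewrite d0; lia.
Qed.
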